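(* Let $A\in\mathbb{R}^{N\times N}$ be a symmetric matrix with elements $a_{kl}$ and non-zero diagonal entries, let $\Omega=\{1,\ldots,N\}$ be the nodal set of its graph, where nodes $k,l$ are adjacent iff $a_{kl}\ne0$, and for $\Omega'\subset\Omega$ let $\mathcal{A}(\Omega')$ denote the set of all nodes adjacent to some node of $\Omega'$. Suppose there exists a nonempty $\mathring{\Omega}\subsetneq\Omega$ such that $\mathcal{A}(\mathring{\Omega})\subsetneq\Omega$. Then there exist disjoint nonempty subsets $\mathring{\Omega}_1,\mathring{\Omega}_2$ and a set $\Gamma$ such that $\Omega=\mathring{\Omega}_1\cup\mathring{\Omega}_2\cup\Gamma$ (disjoint union) and $\Gamma=\mathcal{A}(\mathring{\Omega}_1)\setminus\mathring{\Omega}_1=\mathcal{A}(\mathring{\Omega}_2)\setminus\mathring{\Omega}_2$.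
   Context: $A$ is the sparse symmetric fine-grid stiffness matrix; the proposition underlies a divide-and-conquer splitting of $A$ into two subdomains $\Omega_i=\mathring{\Omega}_i\cup\Gamma$ coupled only through $\Gamma$. *)

From mathcomp Require Import all_boot all_order all_algebra.
Set Implicit Arguments. Unset Strict Implicit. Unset Printing Implicit Defensive.
Import GRing.Theory Num.Theory.
Local Open Scope ring_scope.

Definition adjacent (R : pzRingType) (N : nat) (A : 'M[R]_N) (k l : 'I_N) : bool :=
  A k l != 0.

Definition adjset (R : pzRingType) (N : nat) (A : 'M[R]_N) (S : {set 'I_N})
  : {set 'I_N} := [set l | [exists k in S, adjacent A k l]].

From mathcomp Require Import all_boot all_order all_algebra.
Import GRing.Theory Num.Theory.
Local Open Scope ring_scope.

(* For symmetric A, X |-> ~: adjset A X is an antitone Galois connection of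
   the subset lattice with itself, so its triple iterate equals it.  Starting
   from Om0, put Om2 := ~: adjset A Om0 and Om1 := ~: adjset A Om2; then
   adjset A Om1 = ~: Om2 and adjset A Om2 = ~: Om1, and Gam is what is left of
   the index set after removing Om1 and Om2.  The nonzero diagonal makes every
   set contained in its adjacency set, which gives disjointness of Om1, Om2. *)

Set Implicit Arguments. Unset Strict Implicit.

Section Adjacency.
Variables (R : pzRingType) (N : nat) (A : 'M[R]_N).

Definition nadjset (X : {set 'I_N}) : {set 'I_N} := ~: adjset A X.

Lemma adjsetS (X Y : {set 'I_N}) : X \subset Y -> adjset A X \subset adjset A Y.
Proof.
move=> /subsetP sXY; apply/subsetP => l; rewrite !inE.
by case/exists_inP=> k kX Akl; apply/exists_inP; exists k => //; apply: sXY.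
Qed.

Lemma nadjsetS (X Y : {set 'I_N}) : X \subset Y -> nadjset Y \subset nadjset X.
Proof. by move=> sXY; rewrite setCS adjsetS. Qed.

Lemma sub_adjset (X : {set 'I_N}) :
  (forall i, A i i != 0) -> X \subset adjset A X.
Proof.
by move=> Aii; apply/subsetP => x xX; rewrite inE; apply/exists_inP; exists x; rewrite // /adjacent.
Qed.

Hypothesis symA : A^T = A.

Lemma sub_nadjsetC (X Y : {set 'I_N}) :
  X \subset nadjset Y -> Y \subset nadjset X.
Proof.
move=> /subsetP sXY; apply/subsetP => y yY; rewrite !inE; apply/exists_inP.
case=> x xX Axy; move: (sXY x xX); rewrite !inE => /exists_inP; apply.
by exists y; rewrite // /adjacent -symA mxE.
Qed.

Lemma sub_nadjset2 (X : {set 'I_N}) : X \subset nadjset (nadjset X).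
Proof. exact: sub_nadjsetC. Qed.

Lemma nadjset3 (X : {set 'I_N}) : nadjset (nadjset (nadjset X)) = nadjset X.
Proof.
by apply/eqP; rewrite eqEsubset sub_nadjset2 nadjsetS ?sub_nadjset2.
Qed.

End Adjacency.

Theorem proposition2 (R : realFieldType) (N : nat) (A : 'M[R]_N) :
  A^T = A ->
  (forall i : 'I_N, A i i != 0) ->
  (exists Om0 : {set 'I_N},
      [/\ Om0 != set0, Om0 \proper [set: 'I_N] & adjset A Om0 \proper [set: 'I_N]]) ->
  exists Om1 Om2 Gam : {set 'I_N},
    [/\ Om1 != set0 /\ Om2 != set0,
        [&& [disjoint Om1 & Om2], [disjoint Om1 & Gam] & [disjoint Om2 & Gam]],
        Om1 :|: Om2 :|: Gam = [set: 'I_N],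
        Gam = adjset A Om1 :\: Om1 &
        Gam = adjset A Om2 :\: Om2].
Proof.
move=> symA Aii [Om0 [Om0_n0 _ /properP[_ [x _ xNadj]]]].
set Om2 := nadjset A Om0; set Om1 := nadjset A Om2.
have adj1 : adjset A Om1 = ~: Om2 by rewrite /Om2 -(nadjset3 symA) setCK.
have adj2 : adjset A Om2 = ~: Om1 by rewrite setCK.
have d12 : [disjoint Om1 & Om2].
  by rewrite -(setCK Om2) -subsets_disjoint -adj1 sub_adjset.
have Om1_n0 : Om1 != set0.
  by apply: contraNneq Om0_n0 => Om1_0; rewrite -subset0 -Om1_0 sub_nadjset2.
have Om2_n0 : Om2 != set0 by apply/set0Pn; exists x; rewrite inE.
exists Om1, Om2, (~: (Om1 :|: Om2)); split=> //.
- by rewrite d12 !disjoints_subset setCK subsetUl subsetUr.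
- exact: setUCr.
- by rewrite adj1 setDE -setCU setUC.
- by rewrite adj2 setDE -setCU.
Qed.
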